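(* For every $n\in\mathbb{N}$ and $\xi>0$ there is an interior point fingerprinting code for $n$ users with completeness error $\gamma=0$ and soundness error $\xi$ on a totally ordered domain $X_n$ of size $|X_n|\le\mathrm{tower}^{(n+\log^*(2n^2/\xi))}(1)$.
   Context: $\mathrm{tower}^{(0)}(x)=x$ and $\mathrm{tower}^{(k)}(x)=2^{\mathrm{tower}^{(k-1)}(x)}$; $\log^*$ is the iterated base-2 logarithm. An interior point fingerprinting code over a totally ordered $X$ for $n$ users is a pair of randomized algorithms $(\mathrm{Gen},\mathrm{Trace})$, possibly sharing state: $\mathrm{Gen}$ samples a codebook $C=(x_1,\dots,x_n)\in X^n$; $\mathrm{Trace}(x)$ outputs a user $i\in\{1,\dots,n\}$ or $\bot$. For a coalition $T\subseteq\{1,\dots,n\}$ and pirate algorithm $\mathcal{A}:X^{|T|}\to X$ given $C|_T=(x_i)_{i\in T}$, the output $x=\mathcal{A}(C|_T)$ is feasible if $\min_{i\in T}x_i\le x\le\max_{i\in T}x_i$. Completeness error $\gamma$ and soundness error $\xi$ mean: for all $T$ and all $\mathcal{A}$, $\Pr[\mathrm{Trace}(x)=\bot\wedge x\text{ feasible}]\le\gamma$ and $\Pr[\mathrm{Trace}(x)\in\{1,\dots,n\}\setminus T]\le\xi$, over the coins of $\mathrm{Gen},\mathrm{Trace},\mathcal{A}$. *)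

From mathcomp Require Import all_boot all_order all_algebra.
From mathcomp Require Import boolp reals exp.
Set Implicit Arguments. Unset Strict Implicit. Unset Printing Implicit Defensive.
Import Order.TTheory GRing.Theory Num.Theory.
Local Open Scope ring_scope.

Definition tower (k x : nat) : nat := iter k (fun y => (2 ^ y)%N) x.

Section LogStar.
Variable R : realType.

Definition log2 (z : R) : R := ln z / ln 2.

Definition logstar (z : R) : nat :=
  match pselect (exists k : nat, iter k log2 z <= 1) with
  | left H => ex_minn H
  | right _ => 0%N
  end.

Definition is_distr (T : finType) (p : T -> R) : Prop :=
  (forall t, 0 <= p t) /\ \sum_(t : T) p t = 1.

(* feasibility of pirate output x for coalition T and codebook c:
   min_{i in T} c i <= x <= max_{i in T} c i  (false for empty T) *)
Definition feasible (n m : nat) (T : {set 'I_n}) (c : 'I_n -> 'I_m) (x : 'I_m)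
  : bool :=
  [exists i in T, (c i <= x)%N] && [exists j in T, (x <= c j)%N].

(* Probability of an event over the coins of Gen (shared state s), the
   pirate A (output x) and Trace (output o). *)
Definition prob_event (n m : nat) (S : finType) (gen : S -> R)
  (cb : S -> 'I_n -> 'I_m) (tr : S -> 'I_m -> option 'I_n -> R)
  (A : ('I_n -> 'I_m) -> 'I_m -> R)
  (E : S -> 'I_m -> option 'I_n -> bool) : R :=
  \sum_(s : S) \sum_(x : 'I_m) \sum_(o : option 'I_n)
     (if E s x o then gen s * A (cb s) x * tr s x o else 0).

(* The state space S is shared by Gen and Trace: gen is the
   distribution of the state, cb s the codebook, tr s x the output
   distribution of Trace(x). *)
Definition is_ipfc (n m : nat) (S : finType) (gen : S -> R)
  (cb : S -> 'I_n -> 'I_m) (tr : S -> 'I_m -> option 'I_n -> R)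
  (gamma xi : R) : Prop :=
  is_distr gen /\ (forall s x, is_distr (tr s x)) /\
  forall (T : {set 'I_n}) (A : ('I_n -> 'I_m) -> 'I_m -> R),
    (forall c, is_distr (A c)) ->
    (forall c c', (forall i, i \in T -> c i = c' i) -> forall x, A c x = A c' x) ->
    prob_event gen cb tr A (fun s x o => (o == None) && feasible T (cb s) x)
      <= gamma /\
    prob_event gen cb tr A
      (fun s x o => if o is Some i then i \notin T else false) <= xi.

End LogStar.

(* Codes are built by recursion on the number of users.  From a code for n users
   on a domain of size m, draw a uniformly random word r of m letters in
   {1, ..., k+1}; old user i gets r cut to the length c_i of its old codeword and
   padded with zeros to m base-(k+2) digits, and the new user gets r itself.  A
   point between two codewords agrees with r on a prefix at least as long as the
   shorter one, so the tracer reads off the length p of the longest common prefix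
   with r, runs the old tracer on p, and accuses the new user when that accuses
   nobody.  Framing an innocent old user is framing by the induced pirate on the
   old code, while framing the innocent new user forces the pirate to reproduce
   the letter of r at position max_i c_i, on which no codeword depends: this has
   probability 1/(k+1).  After n steps the soundness error is n/(k+1) on an
   n-fold iterated power of k+2, and k+2 = 2^(tower (L-1) 1) with
   L = log*(2n^2/xi) keeps the domain below tower (n + L) 1. *)

From mathcomp Require Import all_boot all_order all_algebra.
From mathcomp Require Import boolp reals exp.
From mathcomp Require Import perm zify ring.
Set Implicit Arguments. Unset Strict Implicit. Unset Printing Implicit Defensive.

Fixpoint nat_of_digits (B : nat) (d : nat -> nat) (y : nat) : nat :=
  if y is y'.+1 then nat_of_digits B d y' * B + d y' else 0.

Lemma eq_nat_of_digits B d d' y : (forall i, i < y -> d i = d' i) ->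
  nat_of_digits B d y = nat_of_digits B d' y.
Proof.
elim: y => //= y IH dd'; rewrite IH ?dd' // => i lt_iy.
exact/dd'/ltnW.
Qed.

Section Digits.
Variables (B : nat) (d : nat -> nat).
Hypothesis d_lt : forall i, d i < B.

Lemma nat_of_digitsD y e : exists2 w, w < B ^ e &
  nat_of_digits B d (y + e) = nat_of_digits B d y * B ^ e + w.
Proof.
elim: e => [|e [w lt_w IH]]; first by exists 0; rewrite ?addn0 ?muln1.
exists (w * B + d (y + e)); last by rewrite addnS /= IH expnSr mulnDl mulnA addnA.
have : w.+1 * B <= B ^ e * B by rewrite leq_mul2r lt_w orbT.
by have := d_lt (y + e); rewrite expnSr mulSn; lia.
Qed.

Lemma nat_of_digits_lt y : nat_of_digits B d y < B ^ y.
Proof. by have [w + ->] := nat_of_digitsD 0 y. Qed.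

Lemma nat_of_digits_prefix y y' : y <= y' ->
  nat_of_digits B d y' %/ B ^ (y' - y) = nat_of_digits B d y.
Proof.
move=> le_yy'; have [w lt_w] := nat_of_digitsD y (y' - y).
rewrite subnKC // => ->.
by rewrite divnMDl ?expn_gt0 ?(leq_ltn_trans _ (d_lt 0)) // divn_small ?addn0.
Qed.

Lemma nat_of_digits_last y : nat_of_digits B d y.+1 %% B = d y.
Proof. by rewrite /= modnMDl modn_small. Qed.

End Digits.

Lemma bigmax_ltn (I : finType) (F : I -> nat) p :
  0 < p -> (forall i, F i < p) -> \max_i F i < p.
Proof. by case: p => // p _ ltFp; apply/bigmax_leqP => i _; exact: ltFp. Qed.

Definition accuses_outside n (T : {set 'I_n}) (o : option 'I_n) : bool :=
  if o is Some i then i \notin T else false.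

Definition det_complete n m (S : finType) (cb : S -> 'I_n -> 'I_m)
    (tr : S -> 'I_m -> option 'I_n) :=
  forall s (x : 'I_m) i j, cb s i <= x <= cb s j -> tr s x != None.

Section Step.
Variables (k n m : nat) (S : finType) (cb : S -> 'I_n -> 'I_m)
  (tr : S -> 'I_m -> option 'I_n).
Local Notation B := k.+2.

Definition word := {ffun 'I_m -> 'I_k.+1}.

(* Letters are written as the digits 1, ..., k+1, keeping the digit 0 for padding. *)
Definition wdigit (r : word) (i : nat) : nat :=
  if insub i is Some j then (r j).+1 else 0.

Lemma wdigit_lt r i : wdigit r i < B.
Proof. by rewrite /wdigit; case: (insub i : option 'I_m) => [j|//]; rewrite ltnS. Qed.

Lemma wdigit_ord r (j : 'I_m) : wdigit r j = (r j).+1.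
Proof. by rewrite /wdigit valK. Qed.

Definition wprefix r y := nat_of_digits B (wdigit r) y.

Definition prefix_point r y := wprefix r y * B ^ (m - y).

Lemma prefix_point_lt r y : y <= m -> prefix_point r y < B ^ m.
Proof.
move=> le_ym; rewrite /prefix_point -{2}(subnKC le_ym) expnD ltn_pmul2r ?expn_gt0 //.
exact/nat_of_digits_lt/wdigit_lt.
Qed.

Lemma prefix_point_mono r y y' : y <= y' <= m -> prefix_point r y <= prefix_point r y'.
Proof.
case/andP=> le_yy' le_y'm; have [w _] := nat_of_digitsD (wdigit_lt r) y (y' - y).
rewrite subnKC // /prefix_point /wprefix => ->.
rewrite mulnDl -mulnA -expnD.
have -> : y' - y + (m - y') = m - y by lia.
exact: leq_addr.
Qed.

Lemma prefix_point_window r y x : y <= m ->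
  prefix_point r y <= x <= prefix_point r m -> x %/ B ^ (m - y) = wprefix r y.
Proof.
move=> le_ym /andP[lo hi]; apply/eqP; rewrite eqn_leq leq_divRL ?expn_gt0 // lo andbT.
rewrite -ltnS ltn_divLR ?expn_gt0 //.
have [w lt_w] := nat_of_digitsD (wdigit_lt r) y (m - y).
rewrite subnKC // => eq_m; move: hi; rewrite /prefix_point subnn muln1 /wprefix eq_m.
by move=> hi; apply: leq_ltn_trans hi _; rewrite mulSn addnC ltn_add2r.
Qed.

Definition match_len r (x : nat) : nat :=
  \max_(y < m.+1 | x %/ B ^ (m - y) == wprefix r y) y.

Lemma match_len_ge r x y : y <= m -> x %/ B ^ (m - y) = wprefix r y ->
  y <= match_len r x.
Proof.
move=> le_ym eq_y; apply: (leq_bigmax_cond (Ordinal (le_ym : y < m.+1))) => /=.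
by rewrite eq_y.
Qed.

Lemma match_lenP r x : x < B ^ m ->
  match_len r x <= m /\ x %/ B ^ (m - match_len r x) = wprefix r (match_len r x).
Proof.
move=> lt_x.
have P0 : x %/ B ^ (m - @ord0 m) == wprefix r (@ord0 m) by rewrite subn0 divn_small.
rewrite /match_len (bigmax_eq_arg ord0 P0).
case: arg_maxnP => [|y /eqP eq_y _]; first exact: P0.
by split; first by rewrite -ltnS ltn_ord.
Qed.

Lemma match_len_digit r x (j : 'I_m) : x < B ^ m -> j < match_len r x ->
  x %/ B ^ (m - j.+1) %% B = (r j).+1.
Proof.
move=> lt_x lt_jp; have [le_pm eq_p] := match_lenP r lt_x.
have -> : m - j.+1 = (m - match_len r x) + (match_len r x - j.+1) by lia.
rewrite expnD divnMA eq_p /wprefix nat_of_digits_prefix //; last exact: wdigit_lt.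
by rewrite nat_of_digits_last ?wdigit_ord //; exact: wdigit_lt.
Qed.

Definition position (c : 'I_n -> 'I_m) (u : 'I_n.+1) : nat :=
  if unlift ord0 u is Some i then c i else m.

Lemma position_le c u : position c u <= m.
Proof. by rewrite /position; case: unlift => // i; exact: ltnW. Qed.

Definition lift_cb (r : word) (c : 'I_n -> 'I_m) (u : 'I_n.+1) : 'I_(B ^ m) :=
  Ordinal (prefix_point_lt r (position_le c u)).

Definition state := (S * word)%type.

Definition step_cb (sr : state) := lift_cb sr.2 (cb sr.1).

Definition inner_accusation (sr : state) (x : 'I_(B ^ m)) : option 'I_n :=
  obind (tr sr.1) (insub (match_len sr.2 x)).

Definition step_tr (sr : state) (x : 'I_(B ^ m)) : option 'I_n.+1 :=
  if [exists u, step_cb sr u <= x] && (x <= prefix_point sr.2 m) then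
    Some (oapp (lift ord0) ord0 (inner_accusation sr x))
  else None.

Lemma step_complete : det_complete step_cb step_tr.
Proof.
move=> sr x u v /andP[le_ux le_xv]; rewrite /step_tr.
have le_vm : step_cb sr v <= prefix_point sr.2 m.
  by apply: prefix_point_mono; rewrite position_le leqnn.
by case: ifPn => //; rewrite (leq_trans le_xv le_vm) andbT; case/existsP; exists u.
Qed.

Hypothesis m_gt0 : 0 < m.

Definition top_pos s : 'I_m :=
  Ordinal (bigmax_ltn m_gt0 (fun i => ltn_ord (cb s i))).

Lemma top_pos_lt_match_len sr x : det_complete cb tr ->
  step_tr sr x = Some ord0 -> top_pos sr.1 < match_len sr.2 x.
Proof.
case: sr => s r complete; rewrite /step_tr /inner_accusation /=.
case: ifP => // /andP[/existsP[u le_ux] le_x] [acc0].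
set p := match_len r x in acc0 *.
have le_up : position (cb s) u <= p.
  apply: match_len_ge (position_le _ _) (prefix_point_window (position_le _ _) _).
  by rewrite le_ux le_x.
suff [p_gt0 ltcp] : 0 < p /\ forall j, cb s j < p by exact: (bigmax_ltn p_gt0 ltcp).
move: acc0; case: insubP => [y _ eq_yp|]; last first.
  rewrite -leqNgt => le_mp _; split; first exact: leq_trans m_gt0 le_mp.
  by move=> j; apply: leq_trans (ltn_ord _) le_mp.
rewrite /=; case Ey: (tr s y) => [i|] /=.
  by move/eqP; rewrite eq_sym (negbTE (neq_lift _ _)).
move=> _; move: le_up; rewrite -eq_yp /position.
case: unliftP => [i _ /= le_iy|_ /=]; last first.
  by rewrite leqNgt ltn_ord.
have ltcy j : cb s j < y.
  rewrite ltnNge; apply/negP => le_yj.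
  by move: (complete s y i j); rewrite le_iy le_yj Ey => /(_ isT).
by split=> //; exact: leq_ltn_trans (ltcy i).
Qed.

Lemma step_cb_top_indep s (r r' : word) u :
  (forall j, j != top_pos s -> r j = r' j) -> u != ord0 ->
  step_cb (s, r) u = step_cb (s, r') u.
Proof.
move=> rr'; case: (unliftP ord0 u) => [i -> _|->]; last by rewrite eqxx.
apply: val_inj; rewrite /= /position liftK /prefix_point /wprefix; congr (_ * _).
apply: eq_nat_of_digits => i' lt_i'; rewrite /wdigit; case: insubP => [j _ eq_j|//].
rewrite rr' //; apply: contraTneq lt_i' => eq_jJ.
by rewrite -eq_j eq_jJ -leqNgt; exact: leq_bigmax.
Qed.
End Step.

Definition code_size (B n : nat) : nat := iter n (expn B) 1.

Lemma code_size_gt0 B n : 0 < code_size B.+1 n.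
Proof. by case: n => //= n; rewrite expn_gt0. Qed.

Lemma ltn_tower k : k < tower k 1.
Proof. by elim: k => //= k IH; apply: leq_ltn_trans IH (ltn_expl _ (ltnSn 1)). Qed.

Lemma leq_mul2_exp2 b : 2 * b <= 2 ^ b.
Proof.
elim: b => // b IH; rewrite expnS.
have : 0 < 2 ^ b by rewrite expn_gt0.
lia.
Qed.

Lemma code_size_le_tower b n N : 0 < b -> 2 * b <= N ->
  code_size (2 ^ b) n <= tower n N.
Proof.
move=> b_gt0 le_bN.
suff : 2 * b * code_size (2 ^ b) n <= tower n N.
  by apply: leq_trans; rewrite leq_pmull // muln_gt0.
elim: n => [|n IH] /=; first by rewrite muln1.
rewrite -/(code_size (2 ^ b) n) in IH *; set c := code_size (2 ^ b) n in IH *.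
have c_gt0 : 0 < c by rewrite /c -[2 ^ b]prednK ?expn_gt0 // code_size_gt0.
apply: leq_trans (leq_pexp2l (isT : 0 < 2) IH).
have -> : 2 * b * c = b * c + b * c by lia.
rewrite expnD -expnM leq_mul // (leq_trans (leq_mul2_exp2 b)) // leq_exp2l //.
by rewrite leq_pmulr.
Qed.

Lemma tower_base L n :
  exists k, code_size k.+2 n <= tower (n + L) 1 /\ tower L 1 <= 2 * k.+1.
Proof.
case: L => [|L]; first by exists 0; rewrite addn0.
have b_gt0 := leq_ltn_trans (leq0n L) (ltn_tower L); set b := tower L 1 in b_gt0 *.
have two_le : 2 <= 2 ^ b by rewrite (leq_exp2l 1).
exists (2 ^ b - 2); have -> : (2 ^ b - 2).+2 = 2 ^ b by lia.
split; last by rewrite /= -/b; lia.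
by rewrite /tower iterD; apply: code_size_le_tower b_gt0 (leq_mul2_exp2 b).
Qed.

Import Order.TTheory GRing.Theory Num.Theory.
Local Open Scope ring_scope.

Lemma sum_ffun_fixed_coord (R : nmodType) (I V : finType) (J : I) (a : V)
    (H : {ffun I -> V} -> R) :
  (forall r r' : {ffun I -> V}, (forall i, i != J -> r i = r' i) -> H r = H r') ->
  (\sum_(r : {ffun I -> V} | r J == a) H r) *+ #|V| = \sum_r H r.
Proof.
move=> H_J.
have fiber b :
    \sum_(r : {ffun I -> V} | r J == b) H r = \sum_(r : {ffun I -> V} | r J == a) H r.
  pose sw (r : {ffun I -> V}) : {ffun I -> V} :=
    [ffun i => if i == J then tperm a b (r i) else r i].
  have swK : involutive sw.
    by move=> r; apply/ffunP => i; rewrite !ffunE; case: eqP => // ->; rewrite tpermK.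
  rewrite (reindex_inj (inv_inj swK)); apply: eq_big => [r|r _].
    by rewrite ffunE eqxx -(inj_eq (@perm_inj _ (tperm a b))) tpermK tpermR.
  by apply: H_J => i neq_iJ; rewrite ffunE (negbTE neq_iJ).
rewrite [RHS](partition_big (fun r : {ffun I -> V} => r J) xpredT) //= -sumr_const.
by apply: eq_bigr => b _; rewrite fiber.
Qed.

Lemma sum_pair (R : nmodType) (I J : finType) (F : I * J -> R) :
  \sum_p F p = \sum_i \sum_j F (i, j).
Proof. by rewrite pair_bigA; apply: eq_bigr => -[]. Qed.

Lemma sum_ord_val_eq (R : nmodType) m p (F : 'I_m -> R) :
  \sum_(y : 'I_m | val y == p) F y = oapp F 0 (insub p).
Proof.
case: insubP => [y0 _ <-|lt_pm] /=; first exact: big_pred1_eq.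
by rewrite big_pred0 // => y; apply: contraNF lt_pm => /eqP <-.
Qed.

Lemma ler_sum_predU (R : numDomainType) (I : finType) (P P1 P2 : pred I) (F : I -> R) :
  (forall i, 0 <= F i) -> (forall i, P i -> P1 i || P2 i) ->
  \sum_(i | P i) F i <= \sum_(i | P1 i) F i + \sum_(i | P2 i) F i.
Proof.
move=> F_ge0 PP12.
rewrite big_mkcond [X in _ <= X + _]big_mkcond [X in _ <= _ + X]big_mkcond -big_split.
apply: ler_sum => i _ /=.
have ge0 (b : bool) : 0 <= (if b then F i else 0) by case: b.
case: ifP => [/PP12/orP[]->|_]; rewrite ?addr_ge0 //.
  by rewrite lerDl.
by rewrite lerDr.
Qed.

(* Pirates are sub-distributions: the pirate induced on the inner code of the
   recursive construction loses the mass of points matching r entirely. *)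
Definition det_sound (R : numDomainType) n m (S : finType) (cb : S -> 'I_n -> 'I_m)
    (tr : S -> 'I_m -> option 'I_n) (eps : R) :=
  forall (T : {set 'I_n}) (A : ('I_n -> 'I_m) -> 'I_m -> R),
    (forall c x, 0 <= A c x) -> (forall c, \sum_x A c x <= 1) ->
    (forall c c', (forall i, i \in T -> c i = c' i) -> forall x, A c x = A c' x) ->
    \sum_s \sum_(x | accuses_outside T (tr s x)) A (cb s) x <= eps * #|S|%:R.

Section StepSound.
Variables (R : numFieldType) (k n m : nat) (S : finType) (cb : S -> 'I_n -> 'I_m)
  (tr : S -> 'I_m -> option 'I_n) (eps : R).
Hypotheses (m_gt0 : (0 < m)%N) (complete : det_complete cb tr)
  (sound : det_sound cb tr eps).
Local Notation B := k.+2.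
Local Notation word := (word k m).
Local Notation state := (state k m S).
Local Notation top_pos := (top_pos cb m_gt0).

Section Pirate.
Variables (T : {set 'I_n.+1}) (A : ('I_n.+1 -> 'I_(B ^ m)) -> 'I_(B ^ m) -> R).
Hypotheses (A_ge0 : forall c x, 0 <= A c x) (A_le1 : forall c, \sum_x A c x <= 1)
  (A_T : forall c c', (forall u, u \in T -> c u = c' u) -> forall x, A c x = A c' x).
Let T' := [set i : 'I_n | lift ord0 i \in T].

Definition guesses_top_digit (sr : state) (x : 'I_(B ^ m)) : bool :=
  (x %/ B ^ (m - (top_pos sr.1).+1) %% B == (sr.2 (top_pos sr.1)).+1)%N.

Lemma step_accuses_outside sr x : accuses_outside T (step_tr cb tr sr x) ->
  accuses_outside T' (inner_accusation tr sr x) ||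
  (ord0 \notin T) && guesses_top_digit sr x.
Proof.
move: (@top_pos_lt_match_len k n m S cb tr m_gt0 sr x complete); rewrite /step_tr.
case: ifP => // _; case: (inner_accusation tr sr x) => [i|] /= lt_top.
  by rewrite inE => ->.
move=> ->; rewrite /guesses_top_digit.
by rewrite (match_len_digit (j := top_pos sr.1) (ltn_ord x) (lt_top _)) ?eqxx.
Qed.

Definition induced_pirate (r : word) (c : 'I_n -> 'I_m) (y : 'I_m) : R :=
  \sum_(x : 'I_(B ^ m) | match_len r x == y) A (lift_cb r c) x.

Lemma induced_pirate_ge0 r c y : 0 <= induced_pirate r c y.
Proof. exact: sumr_ge0. Qed.

Lemma induced_pirate_le1 r c : \sum_y induced_pirate r c y <= 1.
Proof.
apply: le_trans (A_le1 (lift_cb r c)); rewrite (exchange_big_dep xpredT) //=.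
apply: ler_sum => x _; rewrite (eq_bigl (fun y : 'I_m => val y == match_len r x)).
  by rewrite sum_ord_val_eq; case: insub.
by move=> y; rewrite eq_sym.
Qed.

Lemma induced_pirate_T' r c c' : (forall i, i \in T' -> c i = c' i) ->
  forall y, induced_pirate r c y = induced_pirate r c' y.
Proof.
move=> cc' y; apply: eq_bigr => x _; apply: A_T => u uT; apply: val_inj => /=.
rewrite /position; case: unliftP uT => [i -> uT|//].
by rewrite cc' // inE.
Qed.

Lemma inner_accusation_bound :
  \sum_(sr : state) \sum_(x | accuses_outside T' (inner_accusation tr sr x))
     A (step_cb cb sr) x <= eps * #|S|%:R *+ #|{: word}|.
Proof.
rewrite sum_pair exchange_big /= -sumr_const; apply: ler_sum => r _.
suff -> : \sum_s \sum_(x | accuses_outside T' (inner_accusation tr (s, r) x))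
    A (step_cb cb (s, r)) x =
  \sum_s \sum_(y | accuses_outside T' (tr s y)) induced_pirate r (cb s) y.
  apply: sound; [exact: induced_pirate_ge0 | exact: induced_pirate_le1 |].
  exact: induced_pirate_T'.
apply: eq_bigr => s _; rewrite (exchange_big_dep xpredT) //= big_mkcond /=.
apply: eq_bigr => x _.
rewrite (eq_bigl (fun y : 'I_m => (val y == match_len r x) && accuses_outside T' (tr s y))).
  by rewrite big_mkcondr sum_ord_val_eq /inner_accusation; case: insub.
by move=> y; rewrite andbC eq_sym.
Qed.

(* No codeword of the coalition depends on the letter at top_pos. *)
Lemma guess_fiber s (x : 'I_(B ^ m)) : ord0 \notin T ->
  \sum_(r | guesses_top_digit (s, r) x) A (step_cb cb (s, r)) x <=
  (k.+1)%:R^-1 * \sum_r A (step_cb cb (s, r)) x.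
Proof.
move=> T0; set J := top_pos s; pose H (r : word) := A (step_cb cb (s, r)) x.
have H_J (r r' : word) : (forall j, j != J -> r j = r' j) -> H r = H r'.
  move=> rr'; apply: A_T => u uT; apply: step_cb_top_indep rr' _.
  by apply: contraNneq T0 => <-.
rewrite /guesses_top_digit /=; case: (x %/ _ %% _)%N => [|e].
  by rewrite big_pred0 ?mulr_ge0 ?invr_ge0 ?sumr_ge0.
have [lt_e|ge_e] := ltnP e k.+1; last first.
  rewrite big_pred0 ?mulr_ge0 ?invr_ge0 ?sumr_ge0 // => r.
  by rewrite eqSS; apply: contraTF ge_e => /eqP ->; rewrite -ltnNge.
rewrite (eq_bigl (fun r : word => r J == Ordinal lt_e)); last by move=> r; rewrite eqSS eq_sym.
rewrite -(sum_ffun_fixed_coord (Ordinal lt_e) H_J) card_ord.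
by rewrite mulrnAr -mulrnAl -mulr_natr mulVf ?pnatr_eq0 // mul1r.
Qed.

Lemma guess_bound :
  \sum_(sr : state) \sum_(x | (ord0 \notin T) && guesses_top_digit sr x)
     A (step_cb cb sr) x <= ((k.+1)%:R^-1 * #|{: word}|%:R) *+ #|S|.
Proof.
have [T0|T0] := boolP (ord0 \in T).
  by rewrite big1 ?mulrn_wge0 ?mulr_ge0 ?invr_ge0 // => sr _; rewrite big_pred0.
rewrite sum_pair -sumr_const; apply: ler_sum => s _ /=.
rewrite (exchange_big_dep xpredT) //=.
apply: le_trans (ler_sum _ (fun x _ => guess_fiber s x T0)) _.
rewrite -mulr_sumr exchange_big ler_wpM2l ?invr_ge0 // -sumr_const.
by apply: ler_sum => r _; exact: A_le1.
Qed.

End Pirate.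

Lemma step_sound :
  det_sound (step_cb (k := k) cb) (step_tr cb tr) (eps + (k.+1)%:R^-1).
Proof.
move=> T A A_ge0 A_le1 A_T.
apply: le_trans (ler_sum _ (fun sr _ => ler_sum_predU (A_ge0 (step_cb cb sr))
  (@step_accuses_outside T sr))) _.
rewrite big_split /=.
apply: le_trans (lerD (inner_accusation_bound A_ge0 A_le1 A_T)
  (guess_bound A_ge0 A_le1 A_T)) _.
by rewrite card_prod natrM le_eqVlt; apply/orP; left; apply/eqP; ring.
Qed.

End StepSound.

Lemma det_code_exists (R : numFieldType) k n :
  exists (S : finType) (cb : S -> 'I_n -> 'I_(code_size k.+2 n))
         (tr : S -> 'I_(code_size k.+2 n) -> option 'I_n),
    [/\ (0 < #|S|)%N, det_complete cb tr & det_sound cb tr (n%:R / k.+1%:R : R)].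
Proof.
elim: n => [|n [S [cb [tr [S_gt0 complete sound]]]]].
  exists unit, (fun _ _ => ord0), (fun _ _ => None).
  split; [by rewrite card_unit | by move=> ? ? [] |].
  by move=> T A _ _ _; rewrite big1 ?mul0r // => s _; rewrite big_pred0.
have m_gt0 := code_size_gt0 k.+1 n.
exists (state k (code_size k.+2 n) S), (step_cb cb), (step_tr cb tr); split.
- by rewrite card_prod muln_gt0 S_gt0 card_ffun expn_gt0 card_ord.
- exact: step_complete.
- by rewrite -natr1 mulrDl mul1r; exact: step_sound.
Qed.

Section LogStar.
Variable R : realType.

Lemma log2_le_nat (z : R) t : (log2 z <= t%:R) = (z <= (2 ^ t)%:R).
Proof.
have ln2_gt0 : (0 : R) < ln 2 by rewrite ln_gt0 // ltr1n.
rewrite /log2 ler_pdivrMr //; have [z_le1|z_gt1] := lerP z 1.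
  rewrite (le_trans z_le1) ?ler1n ?expn_gt0 //.
  by rewrite (le_trans (ln_le0 z_le1)) // mulr_ge0 // ltW.
have z_gt0 : 0 < z by apply: lt_trans z_gt1.
by rewrite mulr_natl -lnXn // natrX ler_ln // posrE exprn_gt0.
Qed.

Lemma iter_log2_le1 k (z : R) : (iter k (@log2 R) z <= 1) = (z <= (tower k 1)%:R).
Proof. by elim: k z => [|k IH] z //; rewrite iterSr IH log2_le_nat. Qed.

Lemma logstar_tower (z : R) : z <= (tower (logstar z) 1)%:R.
Proof.
rewrite -iter_log2_le1 /logstar; case: pselect => [ex|nex]; first by case: ex_minnP.
exfalso; apply: nex; exists (Num.truncn z).+1; rewrite iter_log2_le1.
apply: le_trans (ltW (truncnS_gt z)) _.
by rewrite ler_nat ltnW // ltn_tower.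
Qed.

End LogStar.

Lemma sum_if_indicator (R : pzSemiRingType) (I : finType) (t : I) (P : pred I) (g : R) :
  \sum_i (if P i then g * (i == t)%:R else 0) = if P t then g else 0.
Proof.
rewrite (bigD1 t) //= eqxx mulr1 big1 ?addr0 // => i /negbTE neq_it.
by rewrite neq_it mulr0; case: ifP.
Qed.

Definition uniform {R : numFieldType} {S : finType} : S -> R := fun _ => #|S|%:R^-1.

Definition point_trace {R : numFieldType} {n m} {S : finType} (tr : S -> 'I_m -> option 'I_n) :
  S -> 'I_m -> option 'I_n -> R := fun s x o => (o == tr s x)%:R.

Lemma det_code_ipfc (R : realType) n m (S : finType) (cb : S -> 'I_n -> 'I_m)
    (tr : S -> 'I_m -> option 'I_n) (eps xi : R) :
  (0 < #|S|)%N -> det_complete cb tr -> det_sound cb tr eps -> eps <= xi ->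
  is_ipfc uniform cb (point_trace tr) 0 xi.
Proof.
move=> S_gt0 complete sound le_eps; rewrite /uniform /point_trace.
have S_neq0 : #|S|%:R != 0 :> R by rewrite pnatr_eq0 -lt0n.
split; [|split].
- split=> [s|]; first by rewrite invr_ge0.
  by rewrite sumr_const -(mulr_natr (#|S|%:R^-1)) mulVf.
- move=> s x; split=> [o|]; first by case: (_ == _).
  by rewrite (bigD1 (tr s x)) //= eqxx big1 ?addr0 // => o /negbTE ->.
move=> T A A_distr A_T; rewrite /prob_event; split.
  rewrite big1 // => s _; rewrite big1 // => x _.
  rewrite sum_if_indicator; case: ifP => // /andP[/eqP tr_None].
  case/andP=> /existsP[i /andP[_ le_ix]] /existsP[j /andP[_ le_xj]].
  by move: (complete s x i j); rewrite le_ix le_xj tr_None => /(_ isT).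
have -> : \sum_s \sum_x \sum_o (if accuses_outside T o then
    #|S|%:R^-1 * A (cb s) x * (o == tr s x)%:R else 0) =
  #|S|%:R^-1 * \sum_s \sum_(x | accuses_outside T (tr s x)) A (cb s) x.
  rewrite mulr_sumr; apply: eq_bigr => s _; rewrite mulr_sumr [RHS]big_mkcond.
  by apply: eq_bigr => x _; rewrite sum_if_indicator.
rewrite -(ler_pM2l (_ : 0 < #|S|%:R)) ?ltr0n // mulrA mulfV // mul1r mulrC.
apply: le_trans (sound T A (fun c => (A_distr c).1) _ A_T) _.
  by move=> c; rewrite (A_distr c).2.
by rewrite ler_pM2r ?ltr0n.
Qed.

Unset Implicit Arguments.

Theorem lemmaB4 (R : realType) (n : nat) (xi : R) : 0 < xi ->
  exists (m : nat) (S : finType) (gen : S -> R) (cb : S -> 'I_n -> 'I_m)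
         (tr : S -> 'I_m -> option 'I_n -> R),
    (m <= tower (n + logstar (2 * (n%:R) ^+ 2 / xi)) 1)%N /\
    is_ipfc gen cb tr 0 xi.
Proof.
move=> xi_gt0; set z := 2 * (n%:R : R) ^+ 2 / xi.
have [k [size_le tower_le]] := tower_base (logstar z) n.
have [S [cb [tr [S_gt0 complete sound]]]] := det_code_exists R k n.
exists (code_size k.+2 n), S, uniform, cb, (point_trace tr); split; first exact: size_le.
apply: det_code_ipfc S_gt0 complete sound _; rewrite ler_pdivrMr ?ltr0n //.
have : 2 * n%:R ^+ 2 <= 2 * (k.+1%:R * xi).
  rewrite mulrA -ler_pdivrMr // -/z; apply: le_trans (logstar_tower z) _.
  by rewrite -natrM ler_nat.
rewrite ler_pM2l // mulrC; apply: le_trans.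
by rewrite -natrX ler_nat; nia.
Qed.
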